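(* Suppose $x\in X\subseteq\{1,\dots,n\}$ and $\delta$ is invertible in $R$. Then the left $\mathcal P_n$-module $\mathcal A_{X,x}$ is a direct summand of $\mathcal P_n/J_{X-\{x\}}$.
   Context: $R$ is a commutative ring, $\delta\in R$, and $\mathcal P_n=\mathcal P_n(R,\delta)$ is the partition algebra: the free $R$-module on set partitions (''diagrams'') of $\{-n,\dots,-1,1,\dots,n\}$ (negative = left nodes, positive = right nodes), with product by stacking, taking the induced partition on outer nodes, and multiplying by $\delta$ for each component consisting only of middle nodes. For $Z\subseteq\{1,\dots,n\}$, $J_Z$ is the left ideal spanned by diagrams in which among the right nodes labelled by $Z$ there is a singleton block or two distinct nodes in the same block. $A_x$ is the left submodule spanned by diagrams in which the right node $x$ is a singleton, and $\mathcal A_{X,x}=A_x/(A_x\cap J_{X-\{x\}})$, a submodule of $\mathcal P_n/J_{X-\{x\}}$. *)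

From HB Require Import structures.
From mathcomp Require Import all_boot all_algebra.
Set Implicit Arguments. Unset Strict Implicit. Unset Printing Implicit Defensive.
Import GRing.Theory.
Local Open Scope ring_scope.

(* Nodes of a partition diagram on {-n..-1,1..n}:
   (false, i) is the left node -(i+1), (true, i) is the right node i+1. *)
Definition node (n : nat) := (bool * 'I_n)%type.

Definition diagram (n : nat) :=
  {P : {set {set node n}} | partition P [set: node n]}.

(* Stacking a (left) on d (right): three layers of nodes,
   Some false = left nodes of a, None = middle (right of a = left of d),
   Some true = right nodes of d. *)
Definition lay (n : nat) := (option bool * 'I_n)%type.

Section Stack.
Variable n : nat.
Implicit Types (a d : diagram n).

Definition embL (u : node n) : lay n := (if u.1 then None else Some false, u.2).
Definition embR (u : node n) : lay n := (if u.1 then Some true else None, u.2).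
Definition outer (u : node n) : lay n := (Some u.1, u.2).

Definition stack_edge a d : rel (lay n) := fun p q =>
  [exists u : node n, exists v : node n,
     [&& embL u == p, embL v == q & pblock (val a) u == pblock (val a) v]] ||
  [exists u : node n, exists v : node n,
     [&& embR u == p, embR v == q & pblock (val d) u == pblock (val d) v]].

Definition stack_classes a d : {set {set lay n}} :=
  equivalence_partition (connect (stack_edge a d)) [set: lay n].

Definition comp_set a d : {set {set node n}} :=
  [set [set u : node n | outer u \in C] | C : {set lay n} in stack_classes a d] :\ set0.

Definition n_middle a d : nat :=
  #|[set C in stack_classes a d | C \subset [set p : lay n | p.1 == None]]|.

Lemma stack_edge_sym a d : symmetric (stack_edge a d).
Proof.
move=> p q; rewrite /stack_edge.
suff H : forall (f : node n -> lay n) (P : {set {set node n}}),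
  [exists u, exists v, [&& f u == p, f v == q & pblock P u == pblock P v]] =
  [exists u, exists v, [&& f u == q, f v == p & pblock P u == pblock P v]].
  by rewrite H [X in _ || X]H.
move=> f P; apply/existsP/existsP=> -[u /existsP[v /and3P[h1 h2 h3]]];
  by exists v; apply/existsP; exists u; rewrite h1 h2 eq_sym h3.
Qed.

Lemma stack_classesP a d : partition (stack_classes a d) [set: lay n].
Proof.
apply: equivalence_partitionP => x y z _ _ _.
have cs := sym_connect_sym (@stack_edge_sym a d).
split; first exact: connect0.
move=> cxy; apply/idP/idP => h.
  by apply: connect_trans h; rewrite cs.
exact: connect_trans cxy h.
Qed.

Lemma comp_setP a d : partition (comp_set a d) [set: node n].
Proof.
have /and3P[/eqP covP triP nP0] := stack_classesP a d.
apply/and3P; split.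
- rewrite eqEsubset subsetT /=; apply/subsetP=> u _.
  have Pu : outer u \in cover (stack_classes a d) by rewrite covP inE.
  apply/bigcupP; exists [set w : node n | outer w \in pblock (stack_classes a d) (outer u)].
    rewrite !inE; apply/andP; split.
      by apply/eqP/setP => /(_ u); rewrite !inE mem_pblock Pu.
    by apply/imsetP; exists (pblock (stack_classes a d) (outer u)) => //; apply: pblock_mem.
  by rewrite inE mem_pblock.
- apply/trivIsetP => A B /setD1P[_ /imsetP[C PC ->]] /setD1P[_ /imsetP[C' PC' ->]] nAB.
  rewrite -setI_eq0; apply/eqP/setP => u; rewrite !inE.
  apply/negP => /andP[uC uC']; move/negP: nAB; apply.
  by rewrite -(def_pblock triP PC uC) -(def_pblock triP PC' uC').
- by rewrite !inE eqxx.
Qed.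

Definition comp a d : diagram n := Sub (comp_set a d) (comp_setP a d).
End Stack.

Notation Pn R n := {ffun diagram n -> R^o}.

Definition pmul (R : comPzRingType) (delta : R) (n : nat) (f g : Pn R n) : Pn R n :=
  [ffun d => \sum_(d1 : diagram n) \sum_(d2 : diagram n | comp d1 d2 == d)
                f d1 * g d2 * delta ^+ n_middle d1 d2].

Definition right_singleton n (d : diagram n) (z : 'I_n) : bool :=
  [set (true, z)] \in val d.

Definition badZ n (Z : {set 'I_n}) (d : diagram n) : bool :=
  [exists z in Z, right_singleton d z] ||
  [exists z1 in Z, exists z2 in Z,
     (z1 != z2) && (pblock (val d) (true, z1) == pblock (val d) (true, z2))].

(* R-span of a set of basis diagrams = elements supported on it *)
Definition span_of (R : comPzRingType) n (S : pred (diagram n)) (v : Pn R n) : Prop :=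
  forall d, ~~ S d -> v d = 0.

Definition J_ideal (R : comPzRingType) n (Z : {set 'I_n}) : Pn R n -> Prop :=
  span_of (badZ Z).

Definition A_sub (R : comPzRingType) n (x : 'I_n) : Pn R n -> Prop :=
  span_of (fun d => right_singleton d x).

Definition is_left_submodule (R : comPzRingType) (delta : R) n (S : Pn R n -> Prop) : Prop :=
  [/\ S 0,
      (forall u v, S u -> S v -> S (u + v)),
      (forall (r : R) u, S u -> S (r *: u)) &
      (forall a u, S u -> S (pmul delta a u))].

(* Via the correspondence theorem: submodules of P_n / J are submodules of P_n
   containing J.  The image of A_{X,x} = A_x/(A_x \cap J) in P_n / J corresponds
   to A_x + J.  "A_{X,x} is a direct summand of P_n / J" means: there is a
   submodule C of P_n containing J with (A_x + J) + C = P_n and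
   (A_x + J) \cap C = J. *)
Definition direct_summand_mod (R : comPzRingType) (delta : R) n
    (J A : Pn R n -> Prop) : Prop :=
  exists C : Pn R n -> Prop,
    [/\ is_left_submodule delta C,
        (forall v, J v -> C v),
        (forall v, exists a c, [/\ A a, C c & v = a + c]) &
        (forall v, (exists a j, [/\ A a, J j & v = a + j]) -> C v -> J v)].

From Pilot Require Import Defs.
From HB Require Import structures.
From mathcomp Require Import all_boot all_algebra.
Set Implicit Arguments. Unset Strict Implicit. Unset Printing Implicit Defensive.
Import GRing.Theory.
Local Open Scope ring_scope.

(* Write [isolate x d] for the diagram obtained from [d] by cutting the right node
   [x] out of its block.  The linear map [isolate_proj] sends a diagram [d] to
   [isolate x d] if [{x}] is already a block of [d], and to [delta^-1 (isolate x d)]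
   otherwise.  It is a projection onto A_x that maps J_Z into itself when
   [x \notin Z], and it is P_n-linear: isolating [x] commutes with stacking, and
   stacking [a] on [isolate x d] produces one more middle-only component than
   stacking [a] on [d] exactly when [x] is a singleton of [a d] but not of [d],
   which the factor [delta^-1] compensates.  Hence its preimage of J_Z is a
   complement of A_x + J_Z containing J_Z. *)

Lemma partition_pblock_imset (T : finType) (P : {set {set T}}) :
  partition P [set: T] -> P = [set pblock P u | u in [set: T]].
Proof.
move=> partP; rewrite -{1}(equivalence_partition_pblock partP).
by apply: eq_in_imset => u _; apply/setP => v; rewrite !inE.
Qed.

Lemma connect_isolated (T : finType) (e : rel T) p q :
  (forall y, e p y -> y = p) -> connect e p q -> q = p.
Proof.
move=> ep /connectP[s]; elim: s => [|y s IHs] /=; first by move=> _ ->.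
by case/andP => /ep -> ps; apply: IHs.
Qed.

Lemma sum_fibers (V : nmodType) (I J : finType) (f : I -> J) (P : pred J)
    (F : J -> I -> V) :
  \sum_(j | P j) \sum_(i | f i == j) F j i = \sum_(i | P (f i)) F (f i) i.
Proof.
symmetry; rewrite (partition_big f P) //; apply: eq_bigr => j Pj.
by apply: eq_big => [i|i /andP[_ /eqP ->]] //; apply/andb_idl => /eqP ->.
Qed.

Section IsolatePointClasses.
Variables (T : finType) (cl cl' : T -> {set T}) (p0 : T) (mid : {set T}).
Hypotheses (p0_mid : p0 \notin mid) (cl_refl : forall q, q \in cl q)
  (cl'_p0 : cl' p0 = [set p0]) (cl'_cl : forall q, q != p0 -> cl' q = cl q :\ p0)
  (cl_eq : forall q r, r \in cl q -> cl r = cl q).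
Local Notation Kx := (cl p0 :\ p0).
Local Notation mid_classes c := [set C in [set c q | q in [set: T]] | C \subset mid].

Lemma mem_mid_classes_isolate C : (C \in mid_classes cl') =
  [&& Kx != set0, Kx \subset mid & C == Kx] || (C \in mid_classes cl).
Proof.
have setD1_notin q : p0 \notin cl q -> cl q :\ p0 = cl q.
  by move=> p0q; apply/setDidPl; rewrite disjoint_sym disjoints1.
rewrite !inE; apply/idP/idP.
  case/andP => /imsetP[q _ ->]; have [->|qx] := eqVneq q p0.
    by rewrite cl'_p0 sub1set (negbTE p0_mid).
  rewrite cl'_cl //; have [p0q|p0q] := boolP (p0 \in cl q); last first.
    by rewrite setD1_notin // => qmid; rewrite qmid imset_f ?orbT.
  rewrite -(cl_eq p0q) => Kmid; rewrite Kmid eqxx !andbT; apply/orP; left.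
  by apply/set0Pn; exists q; rewrite !inE qx (cl_eq p0q) cl_refl.
case/orP => [/and3P[/set0Pn[q Kq] Kmid /eqP ->]|/andP[/imsetP[q _ ->] qmid]].
  rewrite Kmid andbT; move: Kq; rewrite !inE => /andP[qx p0q].
  by apply/imsetP; exists q; rewrite // cl'_cl // (cl_eq p0q).
have p0q : p0 \notin cl q by apply: contra p0_mid => /(subsetP qmid).
have qx : q != p0 by apply: contraNneq p0q => <-.
by rewrite qmid andbT; apply/imsetP; exists q; rewrite // cl'_cl // setD1_notin.
Qed.

Lemma card_mid_classes_isolate :
  #|mid_classes cl'| = (#|mid_classes cl| + ((Kx != set0) && (Kx \subset mid)))%N.
Proof.
have [Kx_new|] := boolP (_ && _); last first.
  move=> /negbTE Kx_old; rewrite addn0; apply: eq_card => C.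
  by rewrite mem_mid_classes_isolate andbA Kx_old.
have Kx_notin : Kx \notin mid_classes cl.
  apply/negP; rewrite !inE => /andP[/imsetP[q _ Kq] _].
  have qK : q \in cl p0 by move: (cl_refl q); rewrite -Kq => /setD1P[].
  by move: (cl_refl p0); rewrite -(cl_eq qK) -Kq !inE eqxx.
have -> : mid_classes cl' = Kx |: mid_classes cl.
  by apply/setP => C; rewrite mem_mid_classes_isolate in_setU1 andbA Kx_new.
by rewrite cardsU1 Kx_notin addnC.
Qed.

End IsolatePointClasses.

Section Diagram.
Variable n : nat.
Implicit Types (d : diagram n) (u v : node n).

Lemma diagram_trivIset d : trivIset (val d).
Proof. by case/and3P: (valP d). Qed.

Lemma diagram_cover d u : u \in cover (val d).
Proof. by case/and3P: (valP d) => /eqP -> _ _; rewrite inE. Qed.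

Lemma mem_pblock_diagram d u : u \in pblock (val d) u.
Proof. by rewrite mem_pblock diagram_cover. Qed.

Lemma eq_pblock_diagram d u v :
  (pblock (val d) u == pblock (val d) v) = (v \in pblock (val d) u).
Proof. exact: eq_pblock (diagram_trivIset d) (diagram_cover d u). Qed.

Lemma eq_diagram d d' : (forall u, pblock (val d) u = pblock (val d') u) -> d = d'.
Proof.
move=> eq_dd'; apply: val_inj.
by rewrite (partition_pblock_imset (valP d)) (partition_pblock_imset (valP d')); apply: eq_imset.
Qed.

Lemma right_singletonE d z :
  right_singleton d z = (pblock (val d) (true, z) == [set (true, z)]).
Proof.
rewrite /right_singleton; apply/idP/eqP => [zP|<-]; last exact: pblock_mem (diagram_cover d _).
by apply: def_pblock (diagram_trivIset d) zP _; rewrite inE.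
Qed.

Lemma pblock_other_mem d u : pblock (val d) u != [set u] ->
  exists2 w, w \in pblock (val d) u & w != u.
Proof.
move=> not1; have [w /andP[]|none] := pickP [pred w | (w \in pblock (val d) u) && (w != u)].
  by exists w.
case/eqP: not1; apply/setP => w; rewrite inE; apply/idP/eqP => [wu|->].
  by apply/eqP; move: (none w) => /=; rewrite wu /= => /negbFE.
exact: mem_pblock_diagram.
Qed.

Lemma embR_inj : injective (@embR n).
Proof. by move=> [[] i] [[] j] [] // ->. Qed.

Lemma outer_eq_right u z : (outer u == (Some true, z)) = (u == (true, z)).
Proof. by apply/eqP/eqP => [|->//]; case: u => b j [-> ->]. Qed.

Lemma embR_eq_right u z : (embR u == (Some true, z)) = (u == (true, z)).
Proof. by rewrite -[(Some true, z)]/(embR (true, z)) (inj_eq embR_inj). Qed.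

Lemma embL_neq_right u i : embL u != (Some true, i) :> lay n.
Proof. by case: u => [[] j]. Qed.

End Diagram.

Section Stacking.
Variables (n : nat) (a d : diagram n).
Local Notation G := (stack_edge a d).

Lemma connect_stack_sym : connect_sym G.
Proof. exact: sym_connect_sym (@stack_edge_sym n a d). Qed.

Lemma mem_pblock_stack_classes q r :
  (r \in pblock (stack_classes a d) q) = connect G q r.
Proof.
rewrite pblock_equivalence_partition ?inE // => p1 p2 p3 _ _ _.
split=> [|c12]; first exact: connect0.
apply/idP/idP => [c13|]; last exact: connect_trans.
by apply: connect_trans c13; rewrite connect_stack_sym.
Qed.

Lemma pblock_comp u :
  pblock (val (Defs.comp a d)) u = [set v | connect G (outer u) (outer v)].
Proof.
apply: def_pblock; first by case/and3P: (comp_setP a d).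
  rewrite /= /comp_set !inE; apply/andP; split.
    by apply/eqP/setP => /(_ u); rewrite !inE connect0.
  apply/imsetP; exists (pblock (stack_classes a d) (outer u)).
    by apply: pblock_mem; case/and3P: (stack_classesP a d) => /eqP -> _ _; rewrite inE.
  by apply/setP => v; rewrite !inE mem_pblock_stack_classes.
by rewrite inE connect0.
Qed.

Lemma mem_pblock_comp u v :
  (v \in pblock (val (Defs.comp a d)) u) = connect G (outer u) (outer v).
Proof. by rewrite pblock_comp inE. Qed.

Lemma n_middleE : n_middle a d =
  #|[set C in [set [set r | connect G q r] | q in [set: lay n]]
      | C \subset [set p : lay n | p.1 == None]]|.
Proof.
rewrite /n_middle {1}(partition_pblock_imset (stack_classesP a d)).
suff -> : [set pblock (stack_classes a d) u | u in [set: lay n]] =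
  [set [set r | connect G q r] | q in [set: lay n]] by [].
by apply: eq_imset => q; apply/setP => r; rewrite mem_pblock_stack_classes inE.
Qed.

Lemma stack_edge_right_singleton z q : right_singleton d z ->
  G (Some true, z) q -> q = (Some true, z).
Proof.
rewrite right_singletonE => /eqP zP.
case/orP => /existsP[u /existsP[v /and3P[uz vq uv]]].
  by rewrite (negbTE (embL_neq_right _ _)) in uz.
move: uz uv; rewrite -[(Some true, z)]/(embR (true, z)) => /eqP/embR_inj ->.
by rewrite eq_pblock_diagram zP inE => /eqP vz; move: vq; rewrite vz => /eqP.
Qed.

Lemma right_singleton_comp z : right_singleton d z -> right_singleton (Defs.comp a d) z.
Proof.
move=> zP; rewrite right_singletonE; apply/eqP/setP => v.
rewrite mem_pblock_comp inE; apply/idP/eqP => [|->]; last exact: connect0.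
by move/(connect_isolated (fun q => stack_edge_right_singleton zP)); case: v => b j [-> ->].
Qed.

Lemma pblock_comp_right z1 z2 :
  pblock (val d) (true, z1) == pblock (val d) (true, z2) ->
  pblock (val (Defs.comp a d)) (true, z1) == pblock (val (Defs.comp a d)) (true, z2).
Proof.
move=> z12; rewrite eq_pblock_diagram mem_pblock_comp; apply/connect1/orP; right.
by apply/existsP; exists (true, z1); apply/existsP; exists (true, z2); rewrite !eqxx z12.
Qed.

Lemma badZ_comp Z : badZ Z d -> badZ Z (Defs.comp a d).
Proof.
case/orP => [/existsP[z /andP[zZ zP]]|
             /existsP[z1 /andP[z1Z /existsP[z2 /andP[z2Z /andP[z12 eq12]]]]]].
  by apply/orP; left; apply/existsP; exists z; rewrite zZ right_singleton_comp.
apply/orP; right; apply/existsP; exists z1; rewrite z1Z; apply/existsP; exists z2.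
by rewrite z2Z z12 pblock_comp_right.
Qed.

End Stacking.

Lemma J_ideal_submodule (R : comPzRingType) (delta : R) n (Z : {set 'I_n}) :
  is_left_submodule delta (J_ideal (R:=R) Z).
Proof.
split=> [d _|u v Ju Jv d dZ|r u Ju d dZ|a w Jw d dZ]; rewrite ffunE.
- by [].
- by rewrite Ju ?Jv ?addr0.
- by rewrite Ju ?scaler0.
rewrite big1 // => d1 _; rewrite big1 // => d2 /eqP d12.
by rewrite Jw ?mulr0 ?mul0r //; apply: contra dZ; rewrite -d12; apply: badZ_comp.
Qed.

Section Isolate.
Variables (n : nat) (x : 'I_n).
Implicit Types (d : diagram n) (u v : node n).
Local Notation xt := ((true, x) : node n).

Definition isolate_rel d : rel (node n) := fun u v =>
  (u == v) || [&& u != xt, v != xt & pblock (val d) u == pblock (val d) v].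

Lemma isolate_rel_equiv d : {in [set: node n] & &, equivalence_rel (isolate_rel d)}.
Proof.
move=> u v w _ _ _; split; first by rewrite /isolate_rel eqxx.
rewrite /isolate_rel; have [->//|uv /= /and3P[ux vx /eqP uvP]] := eqVneq u v.
rewrite ux vx uvP /=; have [<-|uw] /= := eqVneq u w; first by rewrite ux uvP eqxx orbT.
by have [<-|vw] /= := eqVneq v w; rewrite ?vx ?eqxx.
Qed.

Definition isolate d : diagram n :=
  Sub (equivalence_partition (isolate_rel d) [set: node n])
      (equivalence_partitionP (isolate_rel_equiv d)).

Lemma mem_pblock_isolate d u v : (v \in pblock (val (isolate d)) u) = isolate_rel d u v.
Proof. by rewrite pblock_equivalence_partition ?inE //; apply: isolate_rel_equiv. Qed.

Lemma right_singleton_isolate d : right_singleton (isolate d) x.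
Proof.
rewrite right_singletonE; apply/eqP/setP => v.
by rewrite mem_pblock_isolate inE /isolate_rel eqxx orbF eq_sym.
Qed.

Lemma isolate_id d : right_singleton d x -> isolate d = d.
Proof.
rewrite right_singletonE => /eqP xP; apply: eq_diagram => u; apply/setP => v.
rewrite mem_pblock_isolate /isolate_rel.
have [->|uv] /= := eqVneq u v; first by rewrite mem_pblock_diagram.
have [uxt|ux] /= := eqVneq u xt; first by rewrite uxt xP inE eq_sym -uxt (negbTE uv).
have [->|vx] /= := eqVneq v xt; last by rewrite eq_pblock_diagram.
by rewrite -eq_pblock_diagram eq_sym eq_pblock_diagram xP inE (negbTE ux).
Qed.

Lemma badZ_isolate (Z : {set 'I_n}) d : x \notin Z -> badZ Z d -> badZ Z (isolate d).
Proof.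
move=> xZ; have neq_xt z : z \in Z -> (true, z) != xt.
  by move=> zZ; apply: contraNneq xZ => -[<-].
case/orP => [/existsP[z /andP[zZ zP]]|
             /existsP[z1 /andP[z1Z /existsP[z2 /andP[z2Z /andP[z12 eq12]]]]]].
  apply/orP; left; apply/existsP; exists z; rewrite zZ /=.
  move: zP; rewrite !right_singletonE => /eqP zP; apply/eqP/setP => v.
  rewrite mem_pblock_isolate inE /isolate_rel eq_pblock_diagram zP inE (neq_xt _ zZ) /=.
  by have [->|] := eqVneq v (true, z); rewrite ?andbF.
apply/orP; right; apply/existsP; exists z1; rewrite z1Z; apply/existsP; exists z2.
by rewrite z2Z z12 eq_pblock_diagram mem_pblock_isolate /isolate_rel !neq_xt ?eq12 ?orbT.
Qed.

End Isolate.

Section StackingIsolate.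
Variables (n : nat) (x : 'I_n) (a d : diagram n).
Local Notation xt := ((true, x) : node n).
Local Notation p0 := ((Some true, x) : lay n).
Local Notation G := (stack_edge a d).
Local Notation G' := (stack_edge a (isolate x d)).

Lemma stack_edge_isolate q r : G' q r -> G q r.
Proof.
rewrite /stack_edge; case/orP => [->//|/existsP[u /existsP[v /and3P[uq vr uv]]]].
apply/orP; right; apply/existsP; exists u; apply/existsP; exists v; rewrite uq vr !andTb.
move: uv; rewrite eq_pblock_diagram mem_pblock_isolate /isolate_rel.
by case/orP => [/eqP->|/and3P[_ _ ->]].
Qed.

Lemma stack_edge_isolate_avoid q r : G q r -> q != p0 -> r != p0 -> G' q r.
Proof.
rewrite /stack_edge; case/orP => [->//|/existsP[u /existsP[v /and3P[uq vr uv]]]] qx rx.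
apply/orP; right; apply/existsP; exists u; apply/existsP; exists v; rewrite uq vr !andTb.
rewrite eq_pblock_diagram mem_pblock_isolate /isolate_rel uv !andbT; apply/orP; right.
apply/andP; split; first by apply: contraNneq qx => ux; rewrite -(eqP uq) ux.
by apply: contraNneq rx => vx; rewrite -(eqP vr) vx.
Qed.

Lemma stack_edge_from_x r : G p0 r ->
  exists2 v, r = embR v & pblock (val d) v == pblock (val d) xt.
Proof.
case/orP => /existsP[u /existsP[v /and3P[ux vr uv]]].
  by rewrite (negbTE (embL_neq_right _ _)) in ux.
move: ux uv; rewrite -[p0]/(embR xt) => /eqP/embR_inj ->.
by exists v; rewrite ?(eqP vr) // eq_sym.
Qed.

Lemma stack_edge_isolate_from_x r : G' p0 r -> r = p0.
Proof.
case/orP => /existsP[u /existsP[v /and3P[ux uv vr]]].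
  by rewrite (negbTE (embL_neq_right _ _)) in ux.
move: ux uv vr; rewrite -[p0]/(embR xt) => /eqP/embR_inj ->.
by rewrite eq_pblock_diagram mem_pblock_isolate /isolate_rel eqxx /= orbF => /eqP <- /eqP <-.
Qed.

Lemma connect_isolate_from_x r : connect G' p0 r -> r = p0.
Proof. exact: connect_isolated stack_edge_isolate_from_x. Qed.

Lemma connect_isolate q r : q != p0 -> r != p0 -> connect G' q r = connect G q r.
Proof.
move=> qx rx; apply/idP/idP; first by apply: connect_sub => y z /stack_edge_isolate/connect1.
(* A [G]-path from [q] may pass through [p0]; it then enters and leaves [p0] through
   right nodes of the block of [x] in [d], which are [G']-adjacent to each other. *)
pose reach := [pred s | if s == p0 then
  [exists v, [&& v != xt, pblock (val d) v == pblock (val d) xt & connect G' q (embR v)]]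
  else connect G' q s].
have reach_closed : closed G reach.
  apply: intro_closed; first exact: connect_stack_sym.
  move=> y z yz; rewrite !inE.
  have [zx|zx] := eqVneq z p0; have [yx|yx] := eqVneq y p0 => //.
  - move=> qy; rewrite zx in yz.
    have [v yv vx] : exists2 v, y = embR v & pblock (val d) v == pblock (val d) xt.
      by apply: stack_edge_from_x; rewrite stack_edge_sym.
    apply/existsP; exists v; rewrite vx -yv qy !andbT.
    by apply: contraNneq yx => vxt; rewrite yv vxt.
  - case/existsP => v /and3P[vxt vx qv]; rewrite yx in yz.
    have [w zw wx] := stack_edge_from_x yz.
    apply: connect_trans qv (connect1 _); apply/orP; right.
    apply/existsP; exists v; apply/existsP; exists w; rewrite zw !eqxx !andTb.
    rewrite eq_pblock_diagram mem_pblock_isolate /isolate_rel vxt (eqP vx) -(eqP wx) eqxx.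
    rewrite andbT /=; apply/orP; right; apply: contraNneq zx => wxt; by rewrite zw wxt.
  - by move=> qy; apply: connect_trans qy (connect1 (stack_edge_isolate_avoid yz yx zx)).
by move=> /(closed_connect reach_closed); rewrite !inE (negbTE qx) (negbTE rx) connect0 => <-.
Qed.

Lemma comp_isolate : Defs.comp a (isolate x d) = isolate x (Defs.comp a d).
Proof.
apply: eq_diagram => u; apply/setP => v.
rewrite mem_pblock_comp mem_pblock_isolate /isolate_rel eq_pblock_diagram mem_pblock_comp.
have [->|uv] /= := eqVneq u v; first exact: connect0.
have [uxt|ux] /= := eqVneq u xt.
  apply/negbTE/negP; rewrite uxt => /connect_isolate_from_x/eqP.
  by rewrite outer_eq_right -uxt eq_sym (negbTE uv).
have [vxt|vx] /= := eqVneq v xt.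
  apply/negbTE/negP; rewrite vxt connect_stack_sym => /connect_isolate_from_x/eqP.
  by rewrite outer_eq_right (negbTE ux).
by rewrite connect_isolate ?outer_eq_right.
Qed.

Local Notation K := [set r | connect G p0 r].
Local Notation mid := [set p : lay n | p.1 == None].

Lemma n_middle_isolate_component :
  n_middle a (isolate x d) = (n_middle a d + ((K :\ p0 != set0) && (K :\ p0 \subset mid)))%N.
Proof.
rewrite !n_middleE; apply: card_mid_classes_isolate => [||||q r].
- by rewrite inE.
- by move=> q; rewrite inE connect0.
- by apply/setP => r; rewrite !inE; apply/idP/eqP => [/connect_isolate_from_x|->].
- move=> q qx; apply/setP => r; rewrite !inE.
  have [->|rx] /= := eqVneq r p0; last exact: connect_isolate.
  by apply/negbTE/negP; rewrite connect_stack_sym => /connect_isolate_from_x/eqP; apply/negP.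
- rewrite inE => qr; apply/setP => s; rewrite !inE.
  by apply/idP/idP; apply: connect_trans; rewrite // connect_stack_sym.
Qed.

Lemma stack_component_x_nontrivial : ~~ right_singleton d x -> K :\ p0 != set0.
Proof.
rewrite right_singletonE => /pblock_other_mem[w wx w_neq]; apply/set0Pn; exists (embR w).
rewrite !inE embR_eq_right w_neq /=.
apply/connect1/orP; right; apply/existsP; exists xt; apply/existsP; exists w.
by rewrite !eqxx eq_pblock_diagram wx.
Qed.

Lemma stack_component_x_middle : (K :\ p0 \subset mid) = right_singleton (Defs.comp a d) x.
Proof.
rewrite right_singletonE; apply/subsetP/eqP => [Kmid|xP].
  apply/setP => v; rewrite mem_pblock_comp inE; apply/idP/eqP => [xv|->]; last exact: connect0.
  apply/eqP; apply: contraT => vx; have /Kmid : outer v \in K :\ p0.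
    by rewrite !inE xv andbT outer_eq_right.
  by rewrite inE.
move=> [[b|] i]; rewrite !inE //= -[(Some b, i)]/(outer (b, i)) outer_eq_right.
by case/andP => bx; rewrite -[(Some true, x)]/(outer xt) -mem_pblock_comp xP inE (negbTE bx).
Qed.

Lemma n_middle_isolate : n_middle a (isolate x d) =
  (n_middle a d + (~~ right_singleton d x && right_singleton (Defs.comp a d) x))%N.
Proof.
have [xP|xP] /= := boolP (right_singleton d x); first by rewrite isolate_id ?addn0.
by rewrite n_middle_isolate_component stack_component_x_nontrivial ?stack_component_x_middle.
Qed.

End StackingIsolate.

Section Projection.
Variables (R : comPzRingType) (dinv : R) (n : nat) (x : 'I_n).

Definition isolate_weight (d : diagram n) : R := if right_singleton d x then 1 else dinv.

Definition isolate_proj (v : Pn R n) : Pn R n :=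
  [ffun d => \sum_(d' | isolate x d' == d) isolate_weight d' * v d'].

Lemma isolate_proj_is_linear : linear isolate_proj.
Proof.
move=> r u v; apply/ffunP => d; rewrite !ffunE scaler_sumr -big_split.
by apply: eq_bigr => e _; rewrite !ffunE mulrDr mulrCA.
Qed.

HB.instance Definition _ :=
  GRing.isLinear.Build R (Pn R n) (Pn R n) *:%R isolate_proj isolate_proj_is_linear.

Lemma A_sub_isolate_proj v : A_sub x (isolate_proj v).
Proof.
move=> d dx; rewrite ffunE big1 // => e /eqP ed.
by rewrite -ed right_singleton_isolate in dx.
Qed.

Lemma isolate_proj_id v : A_sub x v -> isolate_proj v = v.
Proof.
move=> Av; apply/ffunP => d; rewrite ffunE.
have [dx|dx] := boolP (right_singleton d x); last first.
  rewrite Av // big_pred0 // => e; apply: contraNF dx => /eqP <-.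
  exact: right_singleton_isolate.
rewrite (bigD1 d) /= ?isolate_id // big1 ?addr0 => [|e /andP[/eqP ed ed']].
  by rewrite /isolate_weight dx mul1r.
have [ex|ex] := boolP (right_singleton e x); last by rewrite Av ?mulr0.
by rewrite isolate_id // in ed; rewrite ed eqxx in ed'.
Qed.

Lemma J_ideal_isolate_proj (Z : {set 'I_n}) v :
  x \notin Z -> J_ideal Z v -> J_ideal Z (isolate_proj v).
Proof.
move=> xZ Jv d dZ; rewrite ffunE big1 // => e /eqP ed.
by rewrite Jv ?mulr0 //; apply: contra dZ; rewrite -ed; apply: badZ_isolate.
Qed.

Variables (delta : R) (delta_dinv : delta * dinv = 1).

Lemma isolate_weight_comp a d :
  isolate_weight (Defs.comp a d) * delta ^+ n_middle a d =
  isolate_weight d * delta ^+ n_middle a (isolate x d).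
Proof.
rewrite n_middle_isolate /isolate_weight.
have [dx|dx] /= := boolP (right_singleton d x); first by rewrite right_singleton_comp ?addn0.
case: (right_singleton (Defs.comp a d) x); last by rewrite addn0.
by rewrite addn1 exprS mulrA [dinv * _]mulrC delta_dinv mul1r.
Qed.

Lemma isolate_proj_pmul a v :
  isolate_proj (pmul delta a v) = pmul delta a (isolate_proj v).
Proof.
apply/ffunP => d; rewrite !ffunE.
transitivity (\sum_d1 \sum_(d2 | isolate x (Defs.comp d1 d2) == d)
    isolate_weight (Defs.comp d1 d2) * (a d1 * v d2 * delta ^+ n_middle d1 d2)).
  under eq_bigr => e _ do rewrite ffunE big_distrr.
  rewrite exchange_big; apply: eq_bigr => d1 _.
  under eq_bigr => e _ do rewrite big_distrr.
  exact: (sum_fibers (Defs.comp d1) (fun e => isolate x e == d)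
    (fun e d2 => isolate_weight e * (a d1 * v d2 * delta ^+ n_middle d1 d2))).
apply: eq_bigr => d1 _; symmetry.
transitivity (\sum_(e | Defs.comp d1 e == d) \sum_(d2 | isolate x d2 == e)
    a d1 * (isolate_weight d2 * v d2) * delta ^+ n_middle d1 e).
  by apply: eq_bigr => e _; rewrite ffunE big_distrr big_distrl.
rewrite sum_fibers; apply: eq_big => [d2|d2 _]; first by rewrite comp_isolate.
rewrite [RHS]mulrCA isolate_weight_comp -!mulrA; congr (_ * _); exact: mulrCA.
Qed.

End Projection.

Lemma direct_summand_mod_of_projection (R : comPzRingType) (delta : R) n
    (J A : Pn R n -> Prop) (phi : {linear Pn R n -> Pn R n}) :
  is_left_submodule delta J ->
  (forall a v, phi (pmul delta a v) = pmul delta a (phi v)) ->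
  (forall v, A (phi v)) -> (forall a, A a -> phi a = a) ->
  (forall v, J v -> J (phi v)) ->
  direct_summand_mod delta J A.
Proof.
move=> [J0 JD JZ JM] phiM A_phi phi_id J_phi.
exists (fun v => J (phi v)); split=> //.
- split=> [|u v|r u|a u]; rewrite ?linear0 ?linearD ?linearZ ?phiM //.
  + exact: JD.
  + exact: JZ.
  + exact: JM.
- move=> v; exists (phi v), (v - phi v); split=> //; last by rewrite addrC subrK.
  by rewrite linearB (phi_id _ (A_phi v)) subrr.
move=> _ [a [j [Aa Jj ->]]]; rewrite linearD phi_id // => Jaj; apply: (JD) => //.
by rewrite -[a](addrK (phi j)) -scaleN1r; apply: JD Jaj (JZ _ _ (J_phi _ Jj)).
Qed.

Unset Implicit Arguments.

Theorem proposition4p7 (R : comPzRingType) (delta : R) (n : nat)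
    (X : {set 'I_n}) (x : 'I_n) :
  x \in X -> (exists dinv : R, delta * dinv = 1) ->
  direct_summand_mod delta (J_ideal (R:=R) (X :\ x)) (A_sub (R:=R) x).
Proof.
move=> _ [dinv delta_dinv].
have xZ : x \notin X :\ x by rewrite setD11.
apply: (direct_summand_mod_of_projection (phi := isolate_proj dinv x)).
- exact: J_ideal_submodule.
- exact: isolate_proj_pmul.
- exact: A_sub_isolate_proj.
- exact: isolate_proj_id.
- by move=> v; apply: J_ideal_isolate_proj.
Qed.
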